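(* Consider Setting B with the regular nodes running Algorithm 2 (any graph sequence, any $f$-total Byzantine behavior). For $k\in\mathbb N$ and $0\le r\le k$ let $\Omega^{(r)}[k]=\{a^r\hat x_s[k-r]:s\in\mathcal S\cap\mathcal R\}$. Suppose that at some $k\in\mathbb N_+$, $\tau_i[k]=m$ for some $i\in(\mathcal V\setminus\mathcal S)\cap\mathcal R$ and $m\in\mathbb N_+$ (necessarily $m\le k$). Then $$\hat x_i[k]\in\mathrm{Conv}\Big(\bigcup_{r=1}^{m}\Omega^{(r)}[k]\Big),$$ where $\mathrm{Conv}$ denotes the convex hull.
   Context: Setting B. Scalar system $x[k+1]=ax[k]$, $a\in\mathbb R$, monitored by nodes $\mathcal V=\{1,\dots,N\}$ with measurements $y_i[k]=c_ix[k]$, $c_i\in\mathbb R$. Source set $\mathcal S=\{i\in\mathcal V:c_i\neq0\}$. Time-varying directed graphs $\mathcal G[k]=(\mathcal V,\mathcal E[k])$, $\mathcal N_i[k]=\{l\ne i:(l,i)\in\mathcal E[k]\}$; the union graph over an interval has the union of the edge sets. An unknown set $\mathcal A\subseteq\mathcal V$ of adversarial nodes with $|\mathcal A|\le f$ ($f$-total model; $\mathcal A$ may intersect $\mathcal S$); $\mathcal R=\mathcal V\setminus\mathcal A$ are regular. Adversaries are Byzantine: at each time they may send arbitrary, possibly different values (of both estimate and freshness index) to different out-neighbors, or send nothing, and may collude. At each time $k$, each node $l$ sends to its out-neighbors a pair (estimate, freshness index); regular $l$ sends its true $(\hat x_l[k],\tau_l[k])$. Algorithm 2 (executed by regular nodes).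 Regular source $i\in\mathcal S$: $\tau_i[k]=0$ for all $k$ and $\hat x_i[k+1]=a\hat x_i[k]+l_i(y_i[k]-c_i\hat x_i[k])$ with observer gain $l_i$. Regular non-source $i$: keeps $\hat x_i[k]$ (arbitrary initial), $\tau_i[k]\in\mathbb N\cup\{\omega\}$ with $\tau_i[0]=\omega$, and a list $\mathcal M_i$ of distinct node labels (initially empty, at most $2f+1$ entries, stored in $2f+1$ slots) with, for each $l\in\mathcal M_i$, a stored estimate $v_{i,l}$, stored index $d_{i,l}\in\mathbb N$ and time stamp $\phi_{i,l}$. At time $k$ let $\mathcal J_i[k]$ be the set of $l\in\mathcal N_i[k]$ whose reported index $\tau_l[k]$ lies in $\mathbb N$ and satisfies $\tau_l[k]\le k$. ''Appending $l$ at time $k$'' means: put $l$ in $\mathcal M_i$ (if absent), set $v_{i,l}=\hat x_l[k]$, $d_{i,l}=\tau_l[k]$ (reported values), $\phi_{i,l}=k$. Filtering update (F) at time $k$ (requires $|\mathcal M_i|=2f+1$): set $\tau_i[k+1]=\max_{l\in\mathcal M_i}d_{i,l}+1$; form $\bar x_{i,l}[k]=a^{k-\phi_{i,l}}v_{i,l}$ for $l\in\mathcal M_i$; discard the $f$ largest and $f$ smallest of these $2f+1$ values, call the remaining one $\bar x_i[k]$, and set $\hat x_i[k+1]=a\bar x_i[k]$. Case $\tau_i[k]=\omega$: let $\mathcal J'=\mathcal J_i[k]\setminus\mathcal M_i$. If $|\mathcal M_i|+|\mathcal J'|<2f+1$, append every $l\in\mathcal J'$, set $\tau_i[k+1]=\omega$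 and $\hat x_i[k+1]=a\hat x_i[k]$. Otherwise append the $2f+1-|\mathcal M_i|$ nodes of $\mathcal J'$ with smallest reported indices (ties broken arbitrarily) and perform (F). Case $\tau_i[k]\ne\omega$: for each $l\in\mathcal J_i[k]\cap\mathcal M_i$ with reported $\tau_l[k]<d_{i,l}$, append $l$ (refreshing its entries); then rank the nodes of $\mathcal M_i\cup(\mathcal J_i[k]\setminus\mathcal M_i)$ by index ($d_{i,l}$ for $l\in\mathcal M_i$, reported $\tau_l[k]$ otherwise), keep the $2f+1$ with smallest index (ties arbitrary), appending newcomers and deleting dropped nodes (a retained node keeps its storage slot; a newcomer occupies the slot of a dropped node), and perform (F). In all cases, after the step every stored $d_{i,l}$ is incremented by $1$, and $\mathcal M_i$, $v$, $\phi$ carry over to time $k+1$. *)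

From HB Require Import structures.
From mathcomp Require Import all_boot all_order all_algebra.
Set Implicit Arguments. Unset Strict Implicit. Unset Printing Implicit Defensive.
Import Order.TTheory GRing.Theory Num.Theory.
Local Open Scope ring_scope.

Section Alg2.
Variables (R : realFieldType) (N : nat).

Definition in_conv (P : R -> Prop) (x : R) : Prop :=
  exists (n : nat) (w p : 'I_n -> R),
    (forall j, 0 <= w j) /\ \sum_j w j = 1 /\ (forall j, P (p j)) /\
    x = \sum_j w j * p j.

(* Freshness index: [None] encodes omega, [Some t] encodes t in N. *)
Definition fidx := option nat.

(* A message: [None] = nothing sent; [Some (estimate, index)]. *)
Definition message := option (R * fidx).

(* discard the f largest and f smallest of 2f+1 values: the remaining one *)
Definition trim (f : nat) (s : seq R) : R := nth 0 (sort <=%R s) f.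

Definition upd (T : Type) (S : {set 'I_N}) (new old : 'I_N -> T) : 'I_N -> T :=
  fun l => if l \in S then new l else old l.

Definition filt_ok (a : R) (f k : nat) (M' : {set 'I_N}) (v' : 'I_N -> R)
    (d' ph' : 'I_N -> nat) (tau1 : fidx) (xh1 : R) : Prop :=
  tau1 = Some (\max_(l in M') d' l).+1 /\
  xh1 = a * trim f [seq a ^+ (k - ph' l) * v' l | l <- enum M'].

Definition store_ok (M' : {set 'I_N}) (v' : 'I_N -> R) (d' ph' : 'I_N -> nat)
    (M1 : {set 'I_N}) (v1 : 'I_N -> R) (d1 ph1 : 'I_N -> nat) : Prop :=
  M1 = M' /\ forall l, l \in M' -> v1 l = v' l /\ d1 l = (d' l).+1 /\ ph1 l = ph' l.

(* One step of Algorithm 2 at a regular non-source node at time k.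
   [nb] = in-neighbour set N_i[k]; [msgs l] = message received from l. *)
Definition nonsource_step (a : R) (f k : nat) (nb : {set 'I_N})
    (msgs : 'I_N -> message)
    (tau0 : fidx) (M0 : {set 'I_N}) (v0 : 'I_N -> R) (d0 ph0 : 'I_N -> nat) (xh0 : R)
    (tau1 : fidx) (M1 : {set 'I_N}) (v1 : 'I_N -> R) (d1 ph1 : 'I_N -> nat) (xh1 : R)
    : Prop :=
  let rx := fun l => if msgs l is Some (z, _) then z else 0 in
  let rt := fun l => if msgs l is Some (_, Some t) then t else 0%N in
  let J := [set l in nb | if msgs l is Some (_, Some t) then (t <= k)%N else false] in
  let kk := fun _ : 'I_N => k in
  match tau0 with
  | None =>
      let J' := J :\: M0 in
      if (#|M0| + #|J'| < (2 * f).+1)%N then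
        store_ok (M0 :|: J') (upd J' rx v0) (upd J' rt d0) (upd J' kk ph0) M1 v1 d1 ph1
        /\ tau1 = None /\ xh1 = a * xh0
      else
        exists T : {set 'I_N},
          T \subset J' /\ #|T| = ((2 * f).+1 - #|M0|)%N /\
          (forall l l', l \in T -> l' \in J' :\: T -> (rt l <= rt l')%N) /\
          store_ok (M0 :|: T) (upd T rx v0) (upd T rt d0) (upd T kk ph0) M1 v1 d1 ph1 /\
          filt_ok a f k (M0 :|: T) (upd T rx v0) (upd T rt d0) (upd T kk ph0) tau1 xh1
  | Some _ =>
      let Rf := [set l in J :&: M0 | (rt l < d0 l)%N] in
      let v_ := upd Rf rx v0 in
      let d_ := upd Rf rt d0 in
      let ph_ := upd Rf kk ph0 in
      let idx := fun l => if l \in M0 then d_ l else rt l in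
      exists M' : {set 'I_N},
        M' \subset M0 :|: J /\ #|M'| = (2 * f).+1 /\
        (forall l l', l \in M' -> l' \in (M0 :|: J) :\: M' -> (idx l <= idx l')%N) /\
        let nw := M' :\: M0 in
        store_ok M' (upd nw rx v_) (upd nw rt d_) (upd nw kk ph_) M1 v1 d1 ph1 /\
        filt_ok a f k M' (upd nw rx v_) (upd nw rt d_) (upd nw kk ph_) tau1 xh1
  end.

(* An execution of Algorithm 2 in Setting B (any graph sequence E, any
   Byzantine behaviour of the nodes in A: their messages msg are unconstrained). *)
Definition alg2_exec (f : nat) (a : R) (c Lg : 'I_N -> R) (E : nat -> rel 'I_N)
    (A : {set 'I_N}) (x : nat -> R)
    (msg : nat -> 'I_N -> 'I_N -> message)
    (xh : 'I_N -> nat -> R) (tau : 'I_N -> nat -> fidx)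
    (M : 'I_N -> nat -> {set 'I_N}) (v : 'I_N -> nat -> 'I_N -> R)
    (d ph : 'I_N -> nat -> 'I_N -> nat) : Prop :=
  (forall k, x k.+1 = a * x k) /\
  (* regular sources: Luenberger observer, index constantly 0 *)
  (forall s, s \notin A -> c s != 0 ->
     forall k, tau s k = Some 0%N /\
       xh s k.+1 = a * xh s k + Lg s * (c s * x k - c s * xh s k)) /\
  (forall k l i, l \notin A -> l != i -> E k l i -> msg k l i = Some (xh l k, tau l k)) /\
  (forall i, i \notin A -> c i = 0 ->
     tau i 0%N = None /\ M i 0%N = set0 /\
     forall k, nonsource_step a f k [set l | (l != i) && E k l i] (fun l => msg k l i)
       (tau i k) (M i k) (v i k) (d i k) (ph i k) (xh i k)
       (tau i k.+1) (M i k.+1) (v i k.+1) (d i k.+1) (ph i k.+1) (xh i k.+1)).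

End Alg2.

(* An entry that a regular non-source node stores for a
   regular neighbour l is l's true estimate at the storage time phi, and its
   stored index is l's index at phi plus the time elapsed since.  By induction
   the propagated value a^(k-phi) x_l[phi] then lies in the hull of the
   a^r x_s[k-r] with r at most that stored index plus one, hence at most m;
   regular sources contribute r = 0.  The filter keeps the (f+1)-th smallest
   of 2f+1 entries, which with at most f adversaries lies between two regular
   entries and so in their hull; multiplying by a, of either sign, keeps it
   there. *)
From HB Require Import structures.
From mathcomp Require Import all_boot all_order all_algebra.
From mathcomp Require Import zify ring lra.
Set Implicit Arguments. Unset Strict Implicit. Unset Printing Implicit Defensive.
Import Order.TTheory GRing.Theory Num.Theory.
Local Open Scope ring_scope.

Section ConvexHull.
Variable R : realFieldType.
Implicit Types (P Q : R -> Prop) (x y z b : R).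

Lemma in_conv_mem P x : P x -> in_conv P x.
Proof.
move=> Px; exists 1%N, (fun=> 1), (fun=> x).
by rewrite !big_ord1 mul1r; split=> //; split.
Qed.

Lemma in_conv_scale P Q b x :
  (forall z, P z -> Q (b * z)) -> in_conv P x -> in_conv Q (b * x).
Proof.
move=> PQ [n [w [p [w_ge0 [w_sum [Pp ->]]]]]].
exists n, w, (fun j => b * p j); do 3!split=> //; first by move=> j; apply: PQ.
by rewrite mulr_sumr; apply: eq_bigr => j _; rewrite mulrCA.
Qed.

Lemma in_conv_sub P Q x : (forall z, P z -> Q z) -> in_conv P x -> in_conv Q x.
Proof. by move=> PQ Px; rewrite -[x]mul1r; apply: in_conv_scale Px => z /PQ; rewrite mul1r. Qed.

Lemma in_conv_convex P x y (l : R) : 0 <= l <= 1 ->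
  in_conv P x -> in_conv P y -> in_conv P (l * x + (1 - l) * y).
Proof.
move=> /andP[l_ge0 l_le1] [n1 [w1 [p1 [w1_ge0 [w1_sum [Pp1 ->]]]]]]
  [n2 [w2 [p2 [w2_ge0 [w2_sum [Pp2 ->]]]]]].
pose w j := match split j with inl j1 => l * w1 j1 | inr j2 => (1 - l) * w2 j2 end.
pose p j := match split j with inl j1 => p1 j1 | inr j2 => p2 j2 end.
have splitl (j : 'I_n1) : split (lshift n2 j) = inl j := unsplitK (inl _).
have splitr (j : 'I_n2) : split (rshift n1 j) = inr j := unsplitK (inr _).
exists (n1 + n2)%N, w, p; split.
  by move=> j; rewrite /w; case: (split j) => j'; rewrite mulr_ge0 ?subr_ge0.
have wl j : w (lshift n2 j) = l * w1 j by rewrite /w splitl.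
have wr j : w (rshift n1 j) = (1 - l) * w2 j by rewrite /w splitr.
have pl j : w (lshift n2 j) * p (lshift n2 j) = l * (w1 j * p1 j).
  by rewrite wl /p splitl mulrA.
have pr j : w (rshift n1 j) * p (rshift n1 j) = (1 - l) * (w2 j * p2 j).
  by rewrite wr /p splitr mulrA.
rewrite !big_split_ord (eq_bigr _ (fun j _ => wl j)) (eq_bigr _ (fun j _ => wr j)).
rewrite (eq_bigr _ (fun j _ => pl j)) (eq_bigr _ (fun j _ => pr j)) -!mulr_sumr.
rewrite w1_sum w2_sum !mulr1 /=; split; first by rewrite addrC subrK.
by split=> // j; rewrite /p; case: (split j).
Qed.

Lemma in_conv_between P x y z : x <= z <= y ->
  in_conv P x -> in_conv P y -> in_conv P z.
Proof.
move=> /andP[xz zy] Px Py; have [eq_xy|xy] := eqVneq x y.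
  by rewrite eq_xy in xz; have -> : z = y by apply/eqP; rewrite eq_le zy xz.
have yx_gt0 : 0 < y - x by rewrite subr_gt0 lt_neqAle xy (le_trans xz zy).
pose l := (y - z) / (y - x).
have -> : z = l * x + (1 - l) * y by rewrite /l; field; rewrite gt_eqF.
apply: in_conv_convex => //.
by rewrite /l ler_pdivrMr // ler_pdivlMr // mul0r mul1r; apply/andP; split; lra.
Qed.

End ConvexHull.

Lemma exists_notin_of_card (T : finType) (S B : {set T}) :
  (#|B| < #|S|)%N -> exists2 l, l \in S & l \notin B.
Proof.
move=> BS; have /subsetPn[l lS lB] : ~~ (S \subset B).
  by apply/negP => /subset_leq_card; rewrite leqNgt BS.
by exists l.
Qed.

Lemma count_enum_set (T : finType) (S : {set T}) (q : pred T) :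
  count q (enum S) = #|[set l in S | q l]|.
Proof.
rewrite cardE /enum_mem size_filter count_filter.
by apply: eq_count => l; rewrite !inE andbC.
Qed.

Section Trim.
Variable R : realFieldType.
Implicit Types (s : seq R) (f : nat).

Lemma sorted_le_nth s i j : sorted <=%R s -> (i <= j < size s)%N -> nth 0 s i <= nth 0 s j.
Proof.
move=> srt /andP[ij js].
by apply: (sorted_leq_nth le_trans lexx); rewrite ?inE //; apply: leq_ltn_trans js.
Qed.

Lemma trim_count_le f s : (f < size s)%N ->
  (f.+1 <= count (fun z => z <= trim f s)%R s)%N.
Proof.
move=> fs; set ss := sort <=%R s.
have srt : sorted <=%R ss := sort_sorted le_total s.
have fss : (f < size ss)%N by rewrite size_sort.
rewrite -(permP (permEl (perm_sort <=%R s))) -/ss -(cat_take_drop f.+1 ss) count_cat.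
apply: leq_trans (leq_addr _ _); rewrite -{1}(size_takel fss).
apply/eq_leq/esym/eqP; rewrite -all_count.
apply/(all_nthP 0) => j; rewrite size_takel // => jf.
by rewrite nth_take // sorted_le_nth // -ltnS jf.
Qed.

Lemma trim_count_ge f s : (f < size s)%N ->
  (size s - f <= count (fun z => trim f s <= z)%R s)%N.
Proof.
move=> fs; set ss := sort <=%R s.
have srt : sorted <=%R ss := sort_sorted le_total s.
rewrite -(permP (permEl (perm_sort <=%R s))) -/ss -(cat_take_drop f ss) count_cat.
apply: leq_trans (leq_addl _ _); rewrite -(size_sort <=%R s) -size_drop.
apply/eq_leq/esym/eqP; rewrite -all_count.
apply/(all_nthP 0) => j; rewrite size_drop => jf.
by rewrite nth_drop sorted_le_nth //; move: jf; rewrite /ss size_sort; lia.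
Qed.

Lemma trim_between (T : finType) (S B : {set T}) (val : T -> R) f :
  ((2 * f).+1 <= #|S|)%N -> (#|B| <= f)%N ->
  exists l1 l2, [/\ l1 \in S, l1 \notin B, l2 \in S, l2 \notin B &
     val l1 <= trim f [seq val l | l <- enum S] <= val l2].
Proof.
move=> S_big B_small; set s := [seq val l | l <- enum S]; set t := trim f s.
have size_s : size s = #|S| by rewrite size_map cardE.
have fs : (f < size s)%N by rewrite size_s; lia.
have /exists_notin_of_card[l1] : (#|B| < #|[set l in S | val l <= t]%R|)%N.
  rewrite -count_enum_set (leq_ltn_trans B_small) //.
  by have := trim_count_le fs; rewrite count_map.
rewrite inE => /andP[l1S l1t] l1B.
have /exists_notin_of_card[l2] : (#|B| < #|[set l in S | t <= val l]%R|)%N.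
  have := trim_count_ge fs; rewrite count_map size_s -count_enum_set => ge_t.
  by apply: leq_trans ge_t; lia.
rewrite inE => /andP[l2S l2t] l2B.
by exists l1, l2; split=> //; rewrite l1t l2t.
Qed.

End Trim.

Section StoredList.
Variables (R : realFieldType) (N : nat) (A : {set 'I_N}).
Variables (xh : 'I_N -> nat -> R) (tau : 'I_N -> nat -> fidx).

Definition faithful_list t (Ml : {set 'I_N}) (vl : 'I_N -> R) (dl phl : 'I_N -> nat) :=
  forall l, l \in Ml -> l \notin A -> (phl l <= t)%N /\
    exists to, [/\ tau l (phl l) = Some to, vl l = xh l (phl l) & dl l = (to + (t - phl l))%N].

Definition regular_msgs t (nb : {set 'I_N}) (msgs : 'I_N -> message R) :=
  forall l, l \in nb -> l \notin A -> msgs l = Some (xh l t, tau l t).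

Definition faithful_filtering a f t tau1 xh1 := exists M' v' d' ph',
  [/\ faithful_list t M' v' d' ph', ((2 * f).+1 <= #|M'|)%N
     & filt_ok a f t M' v' d' ph' tau1 xh1].

Lemma faithful_list_upd t Ml vl dl phl (S : {set 'I_N}) (rx : 'I_N -> R) (rt : 'I_N -> nat) :
  faithful_list t Ml vl dl phl ->
  (forall l, l \in S -> l \notin A -> rx l = xh l t /\ tau l t = Some (rt l)) ->
  faithful_list t (Ml :|: S) (upd S rx vl) (upd S rt dl) (upd S (fun=> t) phl).
Proof.
move=> faith fresh l lMS lA; rewrite /upd; case: ifPn => [lS|lNS].
  by have [-> ->] := fresh l lS lA; split=> //; exists (rt l); rewrite subnn addn0.
by apply: faith lA; move: lMS; rewrite inE (negbTE lNS) orbF.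
Qed.

Lemma faithful_list_subset t (M1 M2 : {set 'I_N}) vl dl phl :
  M2 \subset M1 -> faithful_list t M1 vl dl phl -> faithful_list t M2 vl dl phl.
Proof. by move=> /subsetP sub12 faith l /sub12; apply: faith. Qed.

Lemma faithful_list_store t M' v' d' ph' M1 v1 d1 ph1 :
  faithful_list t M' v' d' ph' -> store_ok M' v' d' ph' M1 v1 d1 ph1 ->
  faithful_list t.+1 M1 v1 d1 ph1.
Proof.
move=> faith [-> carry] l lM lA; have [-> [-> ->]] := carry l lM.
have [ph_le [to [tau_to -> ->]]] := faith l lM lA.
by split; [exact: leqW | exists to; split=> //; rewrite subSn // addnS].
Qed.

Lemma accepted_regular t nb msgs (S : {set 'I_N}) :
  regular_msgs t nb msgs ->
  S \subset [set l in nb | if msgs l is Some (_, Some t') then (t' <= t)%N else false] ->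
  forall l, l \in S -> l \notin A ->
    (if msgs l is Some (z, _) then z else 0) = xh l t /\
    tau l t = Some (if msgs l is Some (_, Some t') then t' else 0%N).
Proof.
move=> reg /subsetP sJ l /sJ; rewrite inE => /andP[lnb acc] lA.
by move: acc; rewrite (reg l lnb lA); case: (tau l t).
Qed.

Lemma nonsource_step_faithful a f t nb msgs tau0 M0 v0 d0 ph0 xh0 tau1 M1 v1 d1 ph1 xh1 :
  regular_msgs t nb msgs -> faithful_list t M0 v0 d0 ph0 ->
  nonsource_step a f t nb msgs tau0 M0 v0 d0 ph0 xh0 tau1 M1 v1 d1 ph1 xh1 ->
  faithful_list t.+1 M1 v1 d1 ph1 /\
  (tau1 = None \/ faithful_filtering a f t tau1 xh1).
Proof.
move=> reg faith.
have conclude M' v' d' ph' : store_ok M' v' d' ph' M1 v1 d1 ph1 ->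
    filt_ok a f t M' v' d' ph' tau1 xh1 -> ((2 * f).+1 <= #|M'|)%N ->
    faithful_list t M' v' d' ph' ->
    faithful_list t.+1 M1 v1 d1 ph1 /\
    (tau1 = None \/ faithful_filtering a f t tau1 xh1).
  move=> store filt card_M' faith'; split; first exact: faithful_list_store store.
  by right; exists M', v', d', ph'.
rewrite /nonsource_step; case: tau0 => [t0|] /=.
  move=> [M' [sub [card_M' [_ [store filt]]]]].
  apply: conclude store filt _ _; first by rewrite card_M'.
  apply: (faithful_list_subset (M1 := M0 :|: _ :|: (M' :\: M0))).
    by apply/subsetP => l lM'; rewrite !inE lM'; case: (l \in M0); rewrite ?orbT.
  apply: faithful_list_upd; first apply: faithful_list_upd faith _.
    apply: accepted_regular reg _; apply/subsetP => l.
    by rewrite !inE => /andP[/andP[/andP[-> ->] _] _].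
  apply: accepted_regular reg _; apply/subsetP => l.
  by rewrite !inE => /andP[lM0 /(subsetP sub)]; rewrite !inE (negbTE lM0).
case: ifP => _.
  move=> [store [-> _]]; split; last by left.
  apply: faithful_list_store store; apply: faithful_list_upd faith _.
  exact: accepted_regular reg (subsetDl _ _).
move=> [T [TJ [card_T [_ [store filt]]]]].
apply: conclude store filt _ _.
  have /subsetDP[_ disj] := TJ.
  have card_U : #|M0 :|: T| = (#|M0| + #|T|)%N.
    by apply/eqP; rewrite (leq_card_setU M0 T).2 disjoint_sym.
  by rewrite card_U card_T -leq_subLR.
apply: faithful_list_upd faith _.
exact: accepted_regular reg (subset_trans TJ (subsetDl _ _)).
Qed.

End StoredList.

Section Execution.
Variables (R : realFieldType) (N f : nat) (a : R) (c Lg : 'I_N -> R)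
  (E : nat -> rel 'I_N) (A : {set 'I_N}) (x : nat -> R)
  (msg : nat -> 'I_N -> 'I_N -> message R)
  (xh : 'I_N -> nat -> R) (tau : 'I_N -> nat -> fidx)
  (M : 'I_N -> nat -> {set 'I_N}) (v : 'I_N -> nat -> 'I_N -> R)
  (d ph : 'I_N -> nat -> 'I_N -> nat).
Hypothesis card_A : (#|A| <= f)%N.
Hypothesis exec : alg2_exec f a c Lg E A x msg xh tau M v d ph.

(* [Omega k lo hi] is the union of the paper's sets Omega^(r)[k] for lo <= r <= hi. *)
Definition Omega k lo hi (z : R) := exists r s,
  [/\ (lo <= r <= hi)%N, s \notin A, c s != 0 & z = a ^+ r * xh s (k - r)%N].

Lemma Omega_shift p n lo hi z :
  Omega p lo hi z -> Omega (p + n) (lo + n) (hi + n) (a ^+ n * z).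
Proof.
move=> [r [s [/andP[lo_r r_hi] sA cs ->]]]; exists (r + n)%N, s; split=> //.
  by rewrite !leq_add2r lo_r.
by rewrite exprD mulrCA mulrA -exprD subnDr.
Qed.

Lemma Omega_widen k lo hi lo' hi' z :
  (lo' <= lo)%N -> (hi <= hi')%N -> Omega k lo hi z -> Omega k lo' hi' z.
Proof.
move=> lo'lo hihi' [r [s [/andP[lo_r r_hi] sA cs ->]]]; exists r, s; split=> //.
by rewrite (leq_trans lo'lo lo_r) (leq_trans r_hi hihi').
Qed.

Lemma regular_msgs_exec t i :
  regular_msgs A xh tau t [set l | (l != i) && E t l i] (fun l => msg t l i).
Proof.
have [_ [_ [send _]]] := exec.
by move=> l; rewrite inE => /andP[li Eli] lA; apply: send.
Qed.

Lemma faithful_list_exec i : i \notin A -> c i = 0 ->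
  forall t, faithful_list A xh tau t (M i t) (v i t) (d i t) (ph i t).
Proof.
have [_ [_ [_ nonsource]]] := exec; move=> iA ci.
have [_ [M_0 step]] := nonsource i iA ci.
elim=> [|t IH]; first by rewrite M_0 => l; rewrite inE.
exact: (nonsource_step_faithful (@regular_msgs_exec t i) IH (step t)).1.
Qed.

Lemma source_estimate_in_Omega s t : s \notin A -> c s != 0 -> Omega t 0 0 (xh s t).
Proof. by move=> sA cs; exists 0%N, s; rewrite expr0 mul1r subn0. Qed.

Lemma filter_in_conv t M' v' d' ph' tau1 xh1 m :
  (forall l p to, l \notin A -> (p <= t)%N -> tau l p = Some to ->
     in_conv (Omega p 0 to) (xh l p)) ->
  faithful_list A xh tau t M' v' d' ph' -> ((2 * f).+1 <= #|M'|)%N ->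
  filt_ok a f t M' v' d' ph' tau1 xh1 -> tau1 = Some m -> in_conv (Omega t.+1 1 m) xh1.
Proof.
move=> regular_in_conv faith card_M' [-> ->] [<-].
pose entry l := a ^+ (t - ph' l) * v' l.
have entry_in_conv l : l \in M' -> l \notin A ->
    in_conv (Omega t.+1 1 (\max_(l in M') d' l).+1) (a * entry l).
  move=> lM' lA; have [ph_le [to [tau_to v_l d_l]]] := faith l lM' lA.
  have d_le : (d' l <= \max_(l in M') d' l)%N := leq_bigmax_cond _ lM'.
  rewrite /entry v_l mulrA -exprS -subSn //.
  apply: in_conv_scale (regular_in_conv _ _ _ lA ph_le tau_to) => z Oz.
  have := Omega_shift (t.+1 - ph' l) Oz; rewrite add0n subnKC ?leqW //.
  apply: Omega_widen; first by rewrite subn_gt0 ltnS.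
  by rewrite subSn // addnS ltnS -d_l.
have [l1 [l2 [l1M' l1A l2M' l2A /andP[le1 le2]]]] := trim_between entry card_M' card_A.
have [a_ge0|a_lt0] := leP 0 a.
  apply: in_conv_between (entry_in_conv _ l1M' l1A) (entry_in_conv _ l2M' l2A).
  by apply/andP; split; apply: ler_wpM2l.
apply: in_conv_between (entry_in_conv _ l2M' l2A) (entry_in_conv _ l1M' l1A).
by apply/andP; split; apply: (ler_wnM2l (ltW a_lt0)).
Qed.

Lemma nonsource_estimate_in_conv k i m : i \notin A -> c i = 0 ->
  tau i k = Some m -> in_conv (Omega k 1 m) (xh i k).
Proof.
have [_ [source [_ nonsource]]] := exec.
elim/ltn_ind: k i m => -[|k] IH i m iA ci tau_m.
  by have [tau0 _] := nonsource i iA ci; rewrite tau0 in tau_m.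
have regular_in_conv l p to : l \notin A -> (p <= k)%N -> tau l p = Some to ->
    in_conv (Omega p 0 to) (xh l p).
  move=> lA pk tau_to; have [cl|cl] := eqVneq (c l) 0.
    by apply: in_conv_sub (IH p pk l to lA cl tau_to) => z; apply: Omega_widen.
  have [tau0 _] := source l lA cl p; rewrite tau0 in tau_to; case: tau_to => <-.
  exact/in_conv_mem/source_estimate_in_Omega.
have [_ [_ step]] := nonsource i iA ci.
have [_ [tau1_none|[M' [v' [d' [ph' [faith card_M' filt]]]]]]] :=
  nonsource_step_faithful (@regular_msgs_exec k i) (faithful_list_exec iA ci (t:=k)) (step k).
  by rewrite tau1_none in tau_m.
exact: filter_in_conv regular_in_conv faith card_M' filt tau_m.
Qed.

End Execution.

Theorem lemma7 (R : realFieldType) (N f : nat) (a : R) (c Lg : 'I_N -> R)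
    (E : nat -> rel 'I_N) (A : {set 'I_N}) (x : nat -> R)
    (msg : nat -> 'I_N -> 'I_N -> message R)
    (xh : 'I_N -> nat -> R) (tau : 'I_N -> nat -> fidx)
    (M : 'I_N -> nat -> {set 'I_N}) (v : 'I_N -> nat -> 'I_N -> R)
    (d ph : 'I_N -> nat -> 'I_N -> nat) :
  (#|A| <= f)%N ->
  alg2_exec f a c Lg E A x msg xh tau M v d ph ->
  forall (k : nat) (i : 'I_N) (m : nat),
    (0 < k)%N -> i \notin A -> c i = 0 -> (0 < m)%N -> tau i k = Some m ->
    in_conv (fun z : R => exists (r : nat) (s : 'I_N),
               [/\ (1 <= r <= m)%N, s \notin A, c s != 0 &
                   z = a ^+ r * xh s (k - r)%N])
            (xh i k).
Proof.
(* Both positivity hypotheses are automatic: tau i 0 = None, and filtering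
   only produces successor indices. *)
move=> card_A exec k i m _ iA ci _ tau_m.
exact: (nonsource_estimate_in_conv card_A exec iA ci tau_m).
Qed.
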